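(* Let $n\geq1$ and $p,q>1$ satisfy \[ \frac{p+1}{pq-1}>\frac{n-1}{2},\qquad \frac{n-1}{2}(q-1)<1 . \] Let $\varepsilon>0$ and $C>0$. Then there do not exist $H\in C^1(\mathbb{R}_+)$ and $G\in C^2(\mathbb{R}_+)$ satisfying, for all $t\geq0$, \[ H'(t)\geq C\langle t\rangle^{-\frac{n-1}{2}(q-1)}G(t)^q,\quad H(t)\geq0,\quad H'(t)\geq0, \] \[ G''(t)+2G'(t)\geq C\langle t\rangle^{-\frac{n-1}{2}(p-1)}H(t)^p,\quad G(t)\geq C\varepsilon,\quad G'(t)\geq0 . \]
   Context: $\langle t\rangle:=\sqrt{1+t^2}$, $\mathbb{R}_+=[0,\infty)$. *)

From Stdlib Require Import Reals Lra.
From Coquelicot Require Import Coquelicot.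
Open Scope R_scope.

Definition jbr (t : R) : R := sqrt (1 + t ^ 2).

(* Real power x^y for x >= 0 (with 0^y = 0, appropriate for y > 0). *)
Definition rpow (x y : R) : R := if Rlt_dec 0 x then Rpower x y else 0.

Definition deriv_on_Rplus (f f' : R -> R) : Prop :=
  forall t, 0 <= t ->
    filterlim (fun h => (f (t + h) - f t) / h)
      (within (fun h => h <> 0 /\ 0 <= t + h) (locally 0))
      (locally (f' t)).

Definition cont_on_Rplus (g : R -> R) : Prop :=
  forall t, 0 <= t ->
    filterlim g (within (fun s => 0 <= s) (locally t)) (locally (g t)).

Definition C1_Rplus (f f' : R -> R) : Prop :=
  deriv_on_Rplus f f' /\ cont_on_Rplus f'.

(* A lower bound ln G(t) >= lam + al ln t - be ln<t> (t > 0) improves itself: integrating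
   H' >= C<t>^-g G^q over [(1-eta)u, u] with u = (1-2eta)t, then
   (e^{2s} G'(s))' >= e^{2s} C<t>^-nu H(u)^p over [u, s], then G' over [(1-eta)t, t],
   yields a bound of the same shape with
     al' = pq al + p + 2,   be' = pq be + nu + pg + 1,   lam' = pq lam + (p + 2) ln eta + O(1).
   Taking eta_k ~ (pq)^-k, the losses in lam grow only linearly in k, so after k steps
   al_k ~ (pq)^k (p + 2)/(pq - 1) and be_k ~ (pq)^k (nu + pg + 1)/(pq - 1), while
   lam_k >= c (pq)^k - O(k).  The hypothesis on (p + 1)/(pq - 1) says exactly that
   nu + pg < p + 1, i.e. al_k - be_k ~ (pq)^k * positive, so at a fixed large t the
   bound on ln G(t) tends to +oo with k. *)

From Stdlib Require Import Reals Lra Psatz.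
From Coquelicot Require Import Coquelicot.
Open Scope R_scope.

Lemma is_derive_of_deriv_on_Rplus f f' t :
  deriv_on_Rplus f f' -> 0 < t -> is_derive f t (f' t).
Proof.
  intros Df Ht. apply is_derive_Reals. intros e He.
  specialize (Df t (Rlt_le _ _ Ht)).
  apply filterlim_locally with (eps := mkposreal e He) in Df.
  destruct Df as [d Hd].
  exists (mkposreal (Rmin d t) (Rmin_pos _ _ (cond_pos d) Ht)); simpl.
  intros h Hh0 Hh.
  assert (Hd' : Rabs h < d) by (eapply Rlt_le_trans; [exact Hh | apply Rmin_l]).
  assert (Ht' : Rabs h < t) by (eapply Rlt_le_trans; [exact Hh | apply Rmin_r]).
  apply (Hd h).
  - change (Rabs (h - 0) < d). now rewrite Rminus_0_r.
  - split; [exact Hh0 |]. apply Rabs_def2 in Ht'. lra.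
Qed.

Lemma le_of_derive_nonneg f df a b :
  a <= b -> (forall x, a <= x <= b -> is_derive f x (df x)) ->
  (forall x, a <= x <= b -> 0 <= df x) -> f a <= f b.
Proof.
  intros Hab Hd Hpos.
  destruct (MVT_gen f a b df) as [c [Hc E]];
    rewrite ?Rmin_left, ?Rmax_right in * by lra.
  - intros x Hx. apply Hd. lra.
  - intros x Hx. apply derivable_continuous_pt. exists (df x).
    apply is_derive_Reals, Hd. lra.
  - assert (0 <= df c * (b - a)) by (apply Rmult_le_pos; [apply Hpos | ]; lra).
    lra.
Qed.

Lemma increment_ge_of_derive_ge f df a b m :
  a <= b -> (forall x, a <= x <= b -> is_derive f x (df x)) ->
  (forall x, a <= x <= b -> m <= df x) -> m * (b - a) <= f b - f a.
Proof.
  intros Hab Hd Hm.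
  enough (f a - m * a <= f b - m * b) by lra.
  apply (le_of_derive_nonneg (fun x => f x - m * x) (fun x => df x - m)); [exact Hab | |].
  - intros x Hx. apply (is_derive_minus f (fun x => m * x)); [now apply Hd |].
    auto_derive; [exact I | ring].
  - intros x Hx. specialize (Hm x Hx). lra.
Qed.

Lemma exp_le_compat x y : x <= y -> exp x <= exp y.
Proof. intros [Hxy | ->]; [left; now apply exp_increasing | lra]. Qed.

Lemma rpow_pos x y : 0 < x -> 0 < rpow x y.
Proof. intros Hx. unfold rpow. destruct (Rlt_dec 0 x); [apply exp_pos | contradiction]. Qed.

Lemma ln_rpow x y : 0 < x -> ln (rpow x y) = y * ln x.
Proof. intros Hx. unfold rpow. destruct (Rlt_dec 0 x); [apply ln_Rpower | contradiction]. Qed.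

Lemma rpow_le_compat_l x x' y : 0 <= y -> 0 < x <= x' -> rpow x y <= rpow x' y.
Proof.
  intros Hy Hx. unfold rpow.
  destruct (Rlt_dec 0 x), (Rlt_dec 0 x'); try lra. now apply Rle_Rpower_l.
Qed.

Lemma rpow_opp_le_compat_l x x' y : 0 <= y -> 0 < x <= x' -> rpow x' (- y) <= rpow x (- y).
Proof.
  intros Hy Hx. unfold rpow.
  destruct (Rlt_dec 0 x), (Rlt_dec 0 x'); try lra. rewrite !Rpower_Ropp.
  apply Rinv_le_contravar; [apply exp_pos | now apply Rle_Rpower_l].
Qed.

Lemma rpow_weight_le_compat C a b x x' y y' :
  0 <= C -> 0 <= a -> 0 <= b -> 0 < x <= x' -> 0 < y <= y' ->
  C * rpow x' (- a) * rpow y b <= C * rpow x (- a) * rpow y' b.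
Proof.
  intros HC Ha Hb Hx Hy.
  apply Rmult_le_compat; [| left; apply rpow_pos; lra | |].
  - apply Rmult_le_pos; [exact HC | left; apply rpow_pos; lra].
  - apply Rmult_le_compat_l; [exact HC | now apply rpow_opp_le_compat_l].
  - now apply rpow_le_compat_l.
Qed.

Lemma jbr_pos t : 0 < jbr t.
Proof. unfold jbr. apply sqrt_lt_R0. nra. Qed.

Lemma jbr_le_compat s t : 0 <= s <= t -> jbr s <= jbr t.
Proof. intros Hst. unfold jbr. apply sqrt_le_1_alt. nra. Qed.

Lemma ln_jbr_le_compat s t : 0 <= s <= t -> ln (jbr s) <= ln (jbr t).
Proof. intros Hst. apply ln_le; [apply jbr_pos | now apply jbr_le_compat]. Qed.

Lemma jbr_ge t : 0 <= t -> 1 + t <= 2 * jbr t.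
Proof.
  intros Ht. unfold jbr.
  assert (E := sqrt_sqrt (1 + t ^ 2) ltac:(nra)). assert (P := sqrt_pos (1 + t ^ 2)).
  set (S := sqrt (1 + t ^ 2)) in *.
  destruct (Rle_or_lt (1 + t) (2 * S)) as [Hle | Hlt]; [exact Hle |].
  assert (0 < (1 + t - 2 * S) * (1 + t + 2 * S)) by (apply Rmult_lt_0_compat; lra).
  nra.
Qed.

Lemma jbr_le t : 1 <= t -> jbr t <= 2 * t.
Proof.
  intros Ht. unfold jbr.
  assert (E := sqrt_sqrt (1 + t ^ 2) ltac:(nra)). assert (P := sqrt_pos (1 + t ^ 2)).
  nra.
Qed.

Lemma ln_one_minus_ge x : 0 <= x <= 1 / 2 -> - (2 * x) <= ln (1 - x).
Proof.
  intros Hx. rewrite <- (ln_exp (- (2 * x))).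
  apply ln_le; [apply exp_pos |].
  rewrite exp_Ropp. apply (Rle_trans _ (/ (1 + 2 * x))).
  - apply Rinv_le_contravar; [lra | apply exp_ineq1_le].
  - apply (Rmult_le_reg_r (1 + 2 * x)); [lra |]. rewrite Rinv_l by lra. nra.
Qed.

Lemma one_minus_exp_ge s t : 0 <= s -> 2 * s <= t -> s / jbr t <= 1 - exp (- (2 * s)).
Proof.
  intros Hs Hst.
  assert (Hexp : exp (- (2 * s)) <= / (1 + 2 * s)).
  { rewrite exp_Ropp. apply Rinv_le_contravar; [lra | apply exp_ineq1_le]. }
  assert (Hjbr := jbr_ge t ltac:(lra)). assert (Hj := jbr_pos t).
  enough (s / jbr t <= 1 - / (1 + 2 * s)) by lra.
  replace (1 - / (1 + 2 * s)) with (2 * s / (1 + 2 * s)) by (field; lra).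
  replace (s / jbr t) with (2 * s / (2 * jbr t)) by (field; lra).
  apply Rmult_le_compat_l; [lra | apply Rinv_le_contravar; lra].
Qed.

Ltac prod_pos :=
  repeat (apply Rmult_lt_0_compat || apply Rdiv_lt_0_compat || apply Rinv_0_lt_compat);
  try apply rpow_pos; try apply jbr_pos; try apply pow_lt; try lra.

Fixpoint drift_seq (r M x0 : R) (k : nat) : R :=
  match k with
  | O => x0
  | S k' => r * drift_seq r M x0 k' - M * INR k
  end.

Lemma drift_seq_closed_form r M x0 k : r <> 1 ->
  let a := M / (r - 1) in let b := (a + M) / (r - 1) in
  drift_seq r M x0 k = r ^ k * (x0 - b) + a * INR k + b.
Proof.
  intros Hr a b. assert (Hr1 : r - 1 <> 0) by lra.
  induction k as [| k IH]; cbn [drift_seq].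
  - simpl. ring.
  - rewrite IH, S_INR. change (r ^ S k) with (r * r ^ k). unfold b, a. field. exact Hr1.
Qed.

Lemma drift_seq_unbounded r M x0 : 1 < r -> 0 <= M ->
  exists D0, forall D Y, D0 <= D -> exists k, Y < drift_seq r M x0 k + (r ^ k - 1) * D.
Proof.
  intros Hr HM.
  set (a := M / (r - 1)). set (b := (a + M) / (r - 1)).
  assert (Ha : 0 <= a) by (apply Rdiv_le_0_compat; lra).
  exists (1 + b - x0). intros D Y HD.
  destruct (Pow_x_infinity r ltac:(rewrite Rabs_right; lra) (Y - b + D + 1)) as [k Hk].
  specialize (Hk k (le_n k)). rewrite Rabs_right in Hk by (left; apply pow_lt; lra).
  exists k. rewrite (drift_seq_closed_form r M x0 k ltac:(lra)). fold a b.
  assert (0 <= a * INR k) by (apply Rmult_le_pos; [exact Ha | apply pos_INR]).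
  assert (r ^ k <= r ^ k * (x0 - b + D)).
  { rewrite <- (Rmult_1_r (r ^ k)) at 1.
    apply Rmult_le_compat_l; [left; apply pow_lt |]; lra. }
  lra.
Qed.

Section System.

Variables (H H' G G' G'' : R -> R) (p q C g nu G0 : R).
Hypotheses (p_gt1 : 1 < p) (q_gt1 : 1 < q) (C_gt0 : 0 < C)
  (g_ge0 : 0 <= g) (nu_ge0 : 0 <= nu) (G0_gt0 : 0 < G0).
Hypothesis H_derive : forall t, 0 < t -> is_derive H t (H' t).
Hypothesis G_derive : forall t, 0 < t -> is_derive G t (G' t).
Hypothesis G'_derive : forall t, 0 < t -> is_derive G' t (G'' t).
Hypothesis H'_ge : forall t, 0 <= t -> C * rpow (jbr t) (- g) * rpow (G t) q <= H' t.
Hypothesis H_ge0 : forall t, 0 <= t -> 0 <= H t.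
Hypothesis H'_ge0 : forall t, 0 <= t -> 0 <= H' t.
Hypothesis G''_ge :
  forall t, 0 <= t -> C * rpow (jbr t) (- nu) * rpow (H t) p <= G'' t + 2 * G' t.
Hypothesis G_ge_G0 : forall t, 0 <= t -> G0 <= G t.
Hypothesis G'_ge0 : forall t, 0 <= t -> 0 <= G' t.

Lemma G_gt0 t : 0 <= t -> 0 < G t.
Proof. intros Ht. specialize (G_ge_G0 t Ht). lra. Qed.

Lemma G_le_compat x y : 0 < x <= y -> G x <= G y.
Proof.
  intros Hxy. apply (le_of_derive_nonneg G G'); [lra | |];
    intros s Hs; [apply G_derive | apply G'_ge0]; lra.
Qed.

Lemma H_le_compat x y : 0 < x <= y -> H x <= H y.
Proof.
  intros Hxy. apply (le_of_derive_nonneg H H'); [lra | |];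
    intros s Hs; [apply H_derive | apply H'_ge0]; lra.
Qed.

Lemma H_ge w u : 0 < w <= u ->
  C * rpow (jbr u) (- g) * rpow (G w) q * (u - w) <= H u.
Proof.
  intros Hwu.
  enough (C * rpow (jbr u) (- g) * rpow (G w) q * (u - w) <= H u - H w)
    by (specialize (H_ge0 w ltac:(lra)); lra).
  apply (increment_ge_of_derive_ge H H'); [lra | intros s Hs; apply H_derive; lra |].
  intros s Hs. eapply Rle_trans; [| apply H'_ge; lra].
  apply rpow_weight_le_compat; try lra.
  - split; [apply jbr_pos | apply jbr_le_compat; lra].
  - split; [apply G_gt0; lra | apply G_le_compat; lra].
Qed.

Lemma H_gt0 u : 0 < u -> 0 < H u.
Proof.
  intros Hu. eapply Rlt_le_trans; [| apply (H_ge (u / 2)); lra].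
  assert (0 < G (u / 2)) by (apply G_gt0; lra).
  prod_pos.
Qed.

(* [G'' + 2 G' >= K] on [u, t] makes [exp (2 x) * (G' x - K / 2)] nondecreasing there. *)
Lemma G'_ge u s t : 0 < u <= s -> s <= t ->
  C / 2 * rpow (jbr t) (- nu) * rpow (H u) p * (1 - exp (- (2 * (s - u)))) <= G' s.
Proof.
  intros Hus Hst.
  set (K := C * rpow (jbr t) (- nu) * rpow (H u) p).
  assert (HK : forall x, u <= x <= t -> K <= G'' x + 2 * G' x).
  { intros x Hx. eapply Rle_trans; [| apply G''_ge; lra].
    apply rpow_weight_le_compat; try lra.
    - split; [apply jbr_pos | apply jbr_le_compat; lra].
    - split; [apply H_gt0; lra | apply H_le_compat; lra]. }
  assert (Hmono : exp (2 * u) * (G' u - K / 2) <= exp (2 * s) * (G' s - K / 2)).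
  { apply (le_of_derive_nonneg (fun x => exp (2 * x) * (G' x - K / 2))
             (fun x => exp (2 * x) * (G'' x + 2 * G' x - K))); [lra | |].
    - intros x Hx. specialize (G'_derive x ltac:(lra)).
      auto_derive; [now exists (G'' x) |].
      replace (Derive (fun x => G' x) x) with (G'' x) by (symmetry; now apply is_derive_unique).
      unfold K. lra.
    - intros x Hx. specialize (HK x ltac:(lra)).
      apply Rmult_le_pos; [left; apply exp_pos | lra]. }
  assert (G'u := G'_ge0 u ltac:(lra)).
  assert (Es : exp (2 * u) = exp (2 * s) * exp (- (2 * (s - u))))
    by (rewrite <- exp_plus; f_equal; ring).
  assert (Hdecay : exp (- (2 * (s - u))) * (G' u - K / 2) <= G' s - K / 2).
  { apply (Rmult_le_reg_l (exp (2 * s))); [apply exp_pos |].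
    rewrite <- Rmult_assoc, <- Es. exact Hmono. }
  assert (0 <= exp (- (2 * (s - u))) * G' u)
    by (apply Rmult_le_pos; [left; apply exp_pos | exact G'u]).
  unfold K in *. lra.
Qed.

Lemma G_ge u v t : 0 < u <= v -> v <= t ->
  C / 2 * rpow (jbr t) (- nu) * rpow (H u) p * (1 - exp (- (2 * (v - u)))) * (t - v) <= G t.
Proof.
  intros Huv Hvt.
  enough (C / 2 * rpow (jbr t) (- nu) * rpow (H u) p * (1 - exp (- (2 * (v - u)))) * (t - v)
            <= G t - G v) by (specialize (G_gt0 v ltac:(lra)); lra).
  apply (increment_ge_of_derive_ge G G'); [lra | intros s Hs; apply G_derive; lra |].
  intros s Hs. eapply Rle_trans; [| apply (G'_ge u s t); lra].
  apply Rmult_le_compat_l.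
  - assert (0 < rpow (jbr t) (- nu) * rpow (H u) p)
      by (apply Rmult_lt_0_compat; apply rpow_pos; [apply jbr_pos | apply H_gt0; lra]).
    nra.
  - assert (exp (- (2 * (s - u))) <= exp (- (2 * (v - u)))) by (apply exp_le_compat; lra).
    lra.
Qed.

Definition ln_G_lower_bound (lam al be : R) : Prop :=
  forall t, 0 < t -> lam + al * ln t - be * ln (jbr t) <= ln (G t).

Lemma ln_G_lower_bound_step lam al be eta :
  0 <= al -> 0 <= be -> 0 < eta <= 1 / 4 -> p * q * al * eta <= 1 ->
  ln_G_lower_bound lam al be ->
  ln_G_lower_bound (p * q * lam + (2 + p) * ln eta + ((1 + p) * ln C - ln 2 - p - 6))
    (2 + p + p * q * al) (nu + 1 + p * g + p * q * be).
Proof.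
  intros Hal Hbe [Heta0 Heta] Hcost IH t Ht.
  set (u := (1 - 2 * eta) * t). set (w := (1 - eta) * u). set (v := (1 - eta) * t).
  assert (Hu : 0 < u) by (unfold u; nra). assert (Hw : 0 < w) by (unfold w; nra).
  assert (Hut : u <= t) by (unfold u; nra). assert (Hwu : w <= u) by (unfold w; nra).
  assert (Gw := G_gt0 w ltac:(lra)). assert (Hu' := H_gt0 u Hu).
  assert (ln_u : ln u = ln (1 - 2 * eta) + ln t) by (apply ln_mult; lra).
  assert (ln_w : ln w = ln (1 - eta) + ln u) by (apply ln_mult; lra).
  assert (ln_Hu : ln C + - g * ln (jbr u) + q * ln (G w) + (ln eta + ln u) <= ln (H u)).
  { assert (HL := H_ge w u ltac:(lra)).
    replace (u - w) with (eta * u) in HL by (unfold w; ring).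
    apply ln_le in HL; [| prod_pos].
    rewrite !ln_mult, !ln_rpow in HL by prod_pos. exact HL. }
  assert (ln_Gt : ln C - ln 2 + - nu * ln (jbr t) + p * ln (H u)
                  + (ln eta + ln t - ln (jbr t)) + (ln eta + ln t) <= ln (G t)).
  { assert (GL := G_ge u v t ltac:(unfold u, v; nra) ltac:(unfold v; nra)).
    replace (v - u) with (eta * t) in GL by (unfold u, v; ring).
    replace (t - v) with (eta * t) in GL by (unfold v; ring).
    assert (Hexp := one_minus_exp_ge (eta * t) t ltac:(nra) ltac:(nra)).
    assert (GL' : C / 2 * rpow (jbr t) (- nu) * rpow (H u) p * (eta * t / jbr t) * (eta * t)
                  <= G t).
    { eapply Rle_trans; [| exact GL].
      apply Rmult_le_compat_r; [nra |]. apply Rmult_le_compat_l; [| exact Hexp].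
      left. prod_pos. }
    apply ln_le in GL'; [| prod_pos].
    rewrite !ln_mult, !ln_rpow, !ln_div, !ln_mult in GL' by prod_pos.
    exact GL'. }
  assert (IHw := IH w Hw).
  assert (ln_eta1 := ln_one_minus_ge eta ltac:(lra)).
  assert (ln_eta2 := ln_one_minus_ge (2 * eta) ltac:(lra)).
  assert (jbr_u := ln_jbr_le_compat u t ltac:(lra)).
  assert (jbr_w := ln_jbr_le_compat w t ltac:(lra)).
  assert (Hpq : 0 < p * q) by nra.
  assert (P1 : p * (ln C + - g * ln (jbr u) + q * ln (G w) + (ln eta + ln u)) <= p * ln (H u))
    by (apply Rmult_le_compat_l; lra).
  assert (P2 : p * q * (lam + al * ln w - be * ln (jbr w)) <= p * q * ln (G w))
    by (apply Rmult_le_compat_l; lra).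
  assert (P3 : p * g * ln (jbr u) <= p * g * ln (jbr t))
    by (apply Rmult_le_compat_l; [nra | exact jbr_u]).
  assert (P4 : p * q * be * ln (jbr w) <= p * q * be * ln (jbr t))
    by (apply Rmult_le_compat_l; [nra | exact jbr_w]).
  assert (P5 : p * q * al * (- (2 * eta) + - (2 * (2 * eta)))
               <= p * q * al * (ln (1 - eta) + ln (1 - 2 * eta)))
    by (apply Rmult_le_compat_l; [nra | lra]).
  assert (P6 : p * (- (2 * (2 * eta))) <= p * ln (1 - 2 * eta)) by (apply Rmult_le_compat_l; lra).
  assert (P7 : p * eta <= p * (1 / 4)) by (apply Rmult_le_compat_l; lra).
  rewrite ln_w, ln_u in P2. rewrite ln_u in P1.
  lra.
Qed.

Hypothesis subcritical : nu + p * g < p + 1.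

Let r := p * q.
Let A := (p + 2) / (r - 1).
Let B := (nu + 1 + p * g) / (r - 1).
Let c := (1 + p) * ln C - ln 2 - p - 6.
Let M := (2 + p) * (ln (4 * (A + 1)) + ln r) + Rabs c.
(* Small enough that p q al eta <= 1 along the iteration, yet with ln eta only linear in k. *)
Let eta (k : nat) := / (4 * (A + 1) * r ^ S k).

Lemma r_gt1 : 1 < r.
Proof. unfold r. nra. Qed.

Lemma A_ge0 : 0 <= A.
Proof. assert (Hr := r_gt1). unfold A. apply Rdiv_le_0_compat; lra. Qed.

Lemma B_ge0 : 0 <= B.
Proof. assert (Hr := r_gt1). unfold B. apply Rdiv_le_0_compat; nra. Qed.

Lemma B_lt_A : B < A.
Proof.
  assert (Hr := r_gt1). unfold A, B, Rdiv.
  apply Rmult_lt_compat_r; [apply Rinv_0_lt_compat |]; lra.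
Qed.

Lemma M_ge0 : 0 <= M.
Proof.
  assert (Hr := r_gt1). assert (HA := A_ge0). unfold M.
  assert (0 <= ln (4 * (A + 1))) by (rewrite <- ln_1; apply ln_le; lra).
  assert (0 <= ln r) by (rewrite <- ln_1; apply ln_le; lra).
  assert (0 <= Rabs c) by apply Rabs_pos.
  nra.
Qed.

Lemma eta_cost k : - M * INR (S k) <= (2 + p) * ln (eta k) + c.
Proof.
  assert (Hr := r_gt1). assert (HA := A_ge0).
  assert (ln_eta : ln (eta k) = - (ln (4 * (A + 1)) + INR (S k) * ln r)).
  { unfold eta. rewrite ln_Rinv, ln_mult, ln_pow by prod_pos. reflexivity. }
  rewrite ln_eta, S_INR. unfold M.
  assert (0 <= ln (4 * (A + 1))) by (rewrite <- ln_1; apply ln_le; lra).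
  assert (0 <= ln r) by (rewrite <- ln_1; apply ln_le; lra).
  assert (- c <= Rabs c) by (rewrite <- Rabs_Ropp; apply Rle_abs).
  assert (0 <= INR k) by apply pos_INR.
  assert (0 <= (2 + p) * ln (4 * (A + 1)) * INR k)
    by (apply Rmult_le_pos; [apply Rmult_le_pos |]; lra).
  assert (0 <= Rabs c * INR k) by (apply Rmult_le_pos; [apply Rabs_pos | lra]).
  lra.
Qed.

Lemma ln_G_lower_bound_iter k :
  ln_G_lower_bound (drift_seq r M (ln G0) k) (A * (r ^ k - 1)) (B * (r ^ k - 1)).
Proof.
  assert (Hr := r_gt1). assert (HA := A_ge0). assert (HB := B_ge0).
  induction k as [| k IH].
  - intros t Ht. cbn [drift_seq pow].
    replace (ln G0 + A * (1 - 1) * ln t - B * (1 - 1) * ln (jbr t)) with (ln G0) by ring.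
    apply ln_le; [exact G0_gt0 | apply G_ge_G0; lra].
  - assert (Hrk : 1 <= r ^ k) by (apply pow_R1_Rle; lra).
    assert (HrSk : r ^ S k = r * r ^ k) by reflexivity.
    assert (HrSk1 : 1 <= r ^ S k) by (apply pow_R1_Rle; lra).
    assert (Hden : 4 <= 4 * (A + 1) * r ^ S k) by nra.
    assert (Heta : 0 < eta k <= 1 / 4).
    { unfold eta. split; [apply Rinv_0_lt_compat; lra |].
      rewrite Rdiv_1_l. apply Rinv_le_contravar; lra. }
    assert (Hcost : p * q * (A * (r ^ k - 1)) * eta k <= 1).
    { fold r. unfold eta. apply (Rmult_le_reg_r (4 * (A + 1) * r ^ S k)); [lra |].
      rewrite Rmult_assoc, Rinv_l by lra. rewrite HrSk. nra. }
    assert (Hal : 0 <= A * (r ^ k - 1)) by (apply Rmult_le_pos; lra).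
    assert (Hbe : 0 <= B * (r ^ k - 1)) by (apply Rmult_le_pos; lra).
    assert (Hstep := ln_G_lower_bound_step _ _ _ (eta k) Hal Hbe Heta Hcost IH).
    assert (Hcost_ln := eta_cost k).
    assert (HA_eq : A * (r - 1) = p + 2) by (unfold A; field; lra).
    assert (HB_eq : B * (r - 1) = nu + 1 + p * g) by (unfold B; field; lra).
    intros t Ht. specialize (Hstep t Ht). cbn [drift_seq].
    replace (A * (r ^ S k - 1)) with (A * (r - 1) + r * (A * (r ^ k - 1)))
      by (rewrite HrSk; ring).
    replace (B * (r ^ S k - 1)) with (B * (r - 1) + r * (B * (r ^ k - 1)))
      by (rewrite HrSk; ring).
    rewrite HA_eq, HB_eq. fold c in Hstep. unfold r in *. lra.
Qed.

Lemma no_solution : False.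
Proof.
  assert (Hr := r_gt1). assert (HAB := B_lt_A). assert (HB := B_ge0).
  destruct (drift_seq_unbounded r M (ln G0) Hr M_ge0) as [D0 HD0].
  set (s := Rmax 0 ((D0 + B * ln 2) / (A - B))).
  assert (Hs0 : 0 <= s) by apply Rmax_l.
  assert (Hs : (D0 + B * ln 2) / (A - B) <= s) by apply Rmax_r.
  assert (HD : D0 <= (A - B) * s - B * ln 2).
  { apply (Rmult_le_compat_l (A - B)) in Hs; [| lra].
    replace ((A - B) * ((D0 + B * ln 2) / (A - B))) with (D0 + B * ln 2) in Hs
      by (field; lra).
    lra. }
  set (t := exp s).
  assert (Ht1 : 1 <= t) by (unfold t; rewrite <- exp_0; apply exp_le_compat; exact Hs0).
  assert (ln_t : ln t = s) by apply ln_exp.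
  assert (ln_jbr : ln (jbr t) <= ln 2 + s).
  { rewrite <- ln_t, <- ln_mult by lra. apply ln_le; [apply jbr_pos | apply jbr_le; lra]. }
  destruct (HD0 _ (ln (G t)) HD) as [k Hk].
  assert (Hbound := ln_G_lower_bound_iter k t ltac:(lra)).
  assert (Hrk : 1 <= r ^ k) by (apply pow_R1_Rle; lra).
  assert (B * (r ^ k - 1) * ln (jbr t) <= B * (r ^ k - 1) * (ln 2 + s))
    by (apply Rmult_le_compat_l; [apply Rmult_le_pos |]; lra).
  rewrite ln_t in Hbound. lra.
Qed.

End System.

Theorem lemma5p3 (n : nat) (p q eps C : R) :
  (1 <= n)%nat -> 1 < p -> 1 < q ->
  (p + 1) / (p * q - 1) > (INR n - 1) / 2 ->
  (INR n - 1) / 2 * (q - 1) < 1 ->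
  0 < eps -> 0 < C ->
  ~ (exists H H' G G' G'' : R -> R,
       C1_Rplus H H' /\ C1_Rplus G G' /\ C1_Rplus G' G'' /\
       forall t, 0 <= t ->
         H' t >= C * rpow (jbr t) (- ((INR n - 1) / 2 * (q - 1))) * rpow (G t) q /\
         H t >= 0 /\ H' t >= 0 /\
         G'' t + 2 * G' t >= C * rpow (jbr t) (- ((INR n - 1) / 2 * (p - 1))) * rpow (H t) p /\
         G t >= C * eps /\ G' t >= 0).
Proof.
  intros Hn Hp Hq Hcrit _ Heps HC [H [H' [G [G' [G'' [[dH _] [[dG _] [[dG' _] Hsys]]]]]]]].
  set (a := (INR n - 1) / 2) in *.
  assert (Ha : 0 <= a) by (apply le_INR in Hn; unfold a; simpl in Hn; lra).
  assert (Hsubcrit : a * (p - 1) + p * (a * (q - 1)) < p + 1).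
  { assert (Hpq : 0 < p * q - 1) by nra.
    apply Rgt_lt, (Rmult_lt_compat_r (p * q - 1)) in Hcrit; [| exact Hpq].
    unfold Rdiv in Hcrit. rewrite Rmult_assoc, Rinv_l in Hcrit by lra.
    lra. }
  apply (no_solution H H' G G' G'' p q C (a * (q - 1)) (a * (p - 1)) (C * eps));
    try (intros t Ht; apply is_derive_of_deriv_on_Rplus; assumption);
    try (intros t Ht; destruct (Hsys t Ht) as (? & ? & ? & ? & ? & ?); lra);
    nra.
Qed.
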